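(* Let $m,n\ge 1$ and let $U=\begin{pmatrix}1&1\\0&1\end{pmatrix}$, $V=\begin{pmatrix}1&0\\1&1\end{pmatrix}$ (representing, under an identification $\mathrm{Mod}(T^2)\cong\mathrm{SL}(2,\mathbb{Z})$, the mapping classes $\tau_a^{-1}$ and $\tau_b$, where $\tau_a,\tau_b$ are Dehn twists about simple closed curves $a,b$ on the torus with geometric intersection number $1$). Among all words consisting of exactly $m$ letters $U$ and $n$ letters $V$ in any order, the word $U^mV^n$ (i.e. $\tau_a^{-m}\tau_b^n$, up to cyclic permutation) has the smallest stable translation length on the Farey graph $\mathcal{F}$. Moreover, $l_{\mathcal{C}}(U^mV^n)\le 2$.
   Context: The Farey graph $\mathcal{F}$ (the curve graph of the torus) has vertex set $\mathbb{Q}\cup\{\infty\}$, $p/q$ and $r/s$ adjacent iff $|ps-qr|=1$, with path metric $d_{\mathcal{C}}$ of unit edge lengths; $\begin{pmatrix}a&b\\c&d\end{pmatrix}\in\mathrm{SL}(2,\mathbb{Z})$ acts by $p/q\mapsto (ap+bq)/(cp+dq)$. The stable translation length of $g$ is $l_{\mathcal{C}}(g)=\liminf_{j\to\infty} d_{\mathcal{C}}(v,g^j(v))/j$ for any vertex $v$. Every word in the letters $U,V$ containing both letters is an Anosov element (absolute trace $>2$). *)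

From Stdlib Require Import ZArith Reals List ClassicalEpsilon.
Open Scope Z_scope.

Record mat2 := M2 { ma : Z; mb : Z; mc : Z; md : Z }.

Definition mmul (x y : mat2) : mat2 :=
  M2 (ma x * ma y + mb x * mc y) (ma x * mb y + mb x * md y)
     (mc x * ma y + md x * mc y) (mc x * mb y + md x * md y).

Definition mid : mat2 := M2 1 0 0 1.

Fixpoint mpow (g : mat2) (j : nat) : mat2 :=
  match j with O => mid | S k => mmul g (mpow g k) end.

Definition matU : mat2 := M2 1 1 0 1.
Definition matV : mat2 := M2 1 0 1 1.

Definition letter (b : bool) : mat2 := if b then matU else matV.
Fixpoint word_mat (w : list bool) : mat2 :=
  match w with nil => mid | b :: w' => mmul (letter b) (word_mat w') end.

Definition numU (w : list bool) : nat := count_occ Bool.bool_dec w true.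
Definition numV (w : list bool) : nat := count_occ Bool.bool_dec w false.

Definition UmVn (m n : nat) : list bool := repeat true m ++ repeat false n.

(** Farey graph. A vertex p/q of Q ∪ {∞} is represented by a pair (p,q) of
    coprime integers, the pairs (p,q) and (-p,-q) representing the same vertex
    (∞ = (1,0)). *)
Definition act (g : mat2) (v : Z * Z) : Z * Z :=
  (ma g * fst v + mb g * snd v, mc g * fst v + md g * snd v).

Definition same_vertex (v w : Z * Z) : Prop :=
  w = v \/ w = (- fst v, - snd v).

Definition farey_adj (v w : Z * Z) : Prop :=
  Z.abs (fst v * snd w - snd v * fst w) = 1.

Inductive farey_path : nat -> Z * Z -> Z * Z -> Prop :=
| fp_nil : forall v w, same_vertex v w -> farey_path O v w
| fp_cons : forall n u v w, farey_adj u v -> farey_path n v w ->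
    farey_path (S n) u w.

Definition farey_dist (v w : Z * Z) : nat :=
  epsilon (inhabits O)
    (fun n => farey_path n v w /\ forall k, farey_path k v w -> (n <= k)%nat).

Open Scope R_scope.

Definition is_liminf (u : nat -> R) (l : R) : Prop :=
  (forall eps, 0 < eps -> exists N, forall j, (N <= j)%nat -> l - eps < u j) /\
  (forall eps, 0 < eps -> forall N, exists j, (N <= j)%nat /\ u j < l + eps).

Definition liminf (u : nat -> R) : R := epsilon (inhabits 0) (is_liminf u).

Definition infty : Z * Z := (1%Z, 0%Z).

Definition stable_length (g : mat2) : R :=
  liminf (fun j => INR (farey_dist infty (act (mpow g j) infty)) / INR j).

From Stdlib Require Import ZArith Reals List.
From Stdlib Require Import Bool Lia Lra Psatz Wf_nat ClassicalEpsilon.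
From Coquelicot Require Lim_seq.

(** Upper bounds: [U^m V^n = (1+mn, m; n, 1)] moves [∞] by two edges (through
    [m/1]), and moves [∞] resp. [1/1] by one edge when [n = 1] resp. [m = 1].
    Lower bounds: the edge [{0, ∞}] separates the Farey graph, and a matrix [M]
    with positive entries maps the closed cone [[0, ∞]] into the open cone
    []0, ∞[].  The sets [M^k [0, ∞] ⊇ M^k ]0, ∞[ ⊇ M^(k+1) [0, ∞] ⊇ ...] form a
    descending chain of levels; an edge descends at most two levels, and at most
    one if the entries of [M] are [>= 2].  Since [∞] is outside level 1 while
    [M^N ∞] lies in level [2N - 2], a word with both letters has
    [l >= 1]; a word with two letters of each kind is conjugate to a product of
    two such words, whose entries are [>= 2], so [l >= 2].  The theorem follows
    by comparing [l(U^m V^n) <= 1] or [<= 2] with these bounds. *)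

Open Scope Z_scope.

Definition det2 (u v : Z * Z) : Z := fst u * snd v - snd u * fst v.
Definition detM (A : mat2) : Z := ma A * md A - mb A * mc A.
Definition adj (A : mat2) : mat2 := M2 (md A) (- mb A) (- mc A) (ma A).
Definition negv (v : Z * Z) : Z * Z := (- fst v, - snd v).

Ltac expand_mat :=
  repeat match goal with
  | A : mat2 |- _ => destruct A
  | v : (Z * Z)%type |- _ => destruct v
  end;
  unfold act, mmul, mid, det2, detM, adj, negv in *; cbn [fst snd ma mb mc md] in *.

Lemma act_mmul A B v : act (mmul A B) v = act A (act B v).
Proof. expand_mat; f_equal; ring. Qed.

Lemma act_mid v : act mid v = v.
Proof. expand_mat; f_equal; ring. Qed.

Lemma act_neg A v : act A (negv v) = negv (act A v).
Proof. expand_mat; f_equal; ring. Qed.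

Lemma det2_act A u v : det2 (act A u) (act A v) = detM A * det2 u v.
Proof. expand_mat; ring. Qed.

Lemma mmul_assoc A B C : mmul A (mmul B C) = mmul (mmul A B) C.
Proof. expand_mat; f_equal; ring. Qed.

Lemma mmul_mid_l A : mmul mid A = A.
Proof. expand_mat; f_equal; ring. Qed.

Lemma mmul_mid_r A : mmul A mid = A.
Proof. expand_mat; f_equal; ring. Qed.

Lemma detM_mmul A B : detM (mmul A B) = detM A * detM B.
Proof. expand_mat; ring. Qed.

Lemma detM_adj A : detM (adj A) = detM A.
Proof. expand_mat; ring. Qed.

Lemma detM_adj_one A : detM A = 1 -> detM (adj A) = 1.
Proof. rewrite detM_adj; auto. Qed.

Lemma adj_l A : detM A = 1 -> mmul (adj A) A = mid.
Proof. expand_mat; intros; f_equal; lia. Qed.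

Lemma adj_r A : detM A = 1 -> mmul A (adj A) = mid.
Proof. expand_mat; intros; f_equal; lia. Qed.

Lemma act_adj_l A v : detM A = 1 -> act (adj A) (act A v) = v.
Proof. intros H; rewrite <- act_mmul, adj_l, act_mid; auto. Qed.

Lemma act_adj_r A v : detM A = 1 -> act A (act (adj A) v) = v.
Proof. intros H; rewrite <- act_mmul, adj_r, act_mid; auto. Qed.

Lemma act_nonzero A v : detM A = 1 -> v <> (0, 0) -> act A v <> (0, 0).
Proof.
  intros HA Hv E. apply Hv. rewrite <- (act_adj_l A v HA), E.
  unfold act; simpl; f_equal; ring.
Qed.

Lemma detM_mpow g k : detM g = 1 -> detM (mpow g k) = 1.
Proof. intros H; induction k; simpl; [reflexivity|]. rewrite detM_mmul, H, IHk; ring. Qed.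

Lemma mpow_intertwine A g M k :
  mmul A g = mmul M A -> mmul A (mpow g k) = mmul (mpow M k) A.
Proof.
  intros H; induction k; simpl.
  - rewrite mmul_mid_l, mmul_mid_r; reflexivity.
  - rewrite mmul_assoc, H, <- mmul_assoc, IHk, mmul_assoc; reflexivity.
Qed.

Lemma mpow_succ_r g k : mpow g (S k) = mmul (mpow g k) g.
Proof. apply mpow_intertwine; reflexivity. Qed.

Lemma negv_negv v : negv (negv v) = v.
Proof. expand_mat; f_equal; ring. Qed.

Lemma det2_swap u v : det2 v u = - det2 u v.
Proof. expand_mat; ring. Qed.

Lemma det2_neg_l u v : det2 (negv u) v = - det2 u v.
Proof. expand_mat; ring. Qed.

Lemma farey_adj_sym u v : farey_adj u v -> farey_adj v u.
Proof.
  unfold farey_adj; intros H. fold (det2 v u); rewrite det2_swap, Z.abs_opp; exact H.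
Qed.

Lemma farey_adj_neg u v : farey_adj u v -> farey_adj (negv u) v.
Proof.
  unfold farey_adj; intros H. fold (det2 (negv u) v); rewrite det2_neg_l, Z.abs_opp; exact H.
Qed.

Lemma farey_adj_act A u v : detM A = 1 -> farey_adj u v -> farey_adj (act A u) (act A v).
Proof.
  unfold farey_adj; intros HA H. fold (det2 (act A u) (act A v)) (det2 u v) in *.
  rewrite det2_act, HA, Z.mul_1_l; exact H.
Qed.

Lemma farey_adj_nonzero u v : farey_adj u v -> u <> (0, 0).
Proof. unfold farey_adj; intros H ->; simpl in H; discriminate. Qed.

Lemma same_vertex_sym u v : same_vertex u v -> same_vertex v u.
Proof.
  intros [-> | ->]; [left; reflexivity|]. right; destruct u; simpl; f_equal; ring.
Qed.

Lemma path_neg_start n v w : farey_path n v w -> farey_path n (negv v) w.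
Proof.
  destruct 1 as [v w [-> | ->] | n u x w Hux Hx].
  - apply fp_nil; right; symmetry; apply negv_negv.
  - apply fp_nil; left; reflexivity.
  - eapply fp_cons; [apply farey_adj_neg, Hux | exact Hx].
Qed.

Lemma path_app n k u v w :
  farey_path n u v -> farey_path k v w -> farey_path (n + k) u w.
Proof.
  induction 1 as [u v [-> | ->] | n u x v Hux _ IH]; intros Hk; simpl.
  - exact Hk.
  - rewrite <- (negv_negv u); apply path_neg_start, Hk.
  - eapply fp_cons; [exact Hux | apply IH, Hk].
Qed.

Lemma path_edge u v : farey_adj u v -> farey_path 1 u v.
Proof. intros H; eapply fp_cons; [exact H | apply fp_nil; left; reflexivity]. Qed.

Lemma path_rev n u v : farey_path n u v -> farey_path n v u.
Proof.
  induction 1 as [v w H | n u v w H _ IH].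
  - apply fp_nil, same_vertex_sym, H.
  - rewrite <- Nat.add_1_r. eapply path_app; [exact IH|].
    apply path_edge, farey_adj_sym, H.
Qed.

Lemma path_act A n v w : detM A = 1 -> farey_path n v w -> farey_path n (act A v) (act A w).
Proof.
  intros HA; induction 1 as [v w [-> | ->] | n u x w Hux _ IH].
  - apply fp_nil; left; reflexivity.
  - apply fp_nil; right; exact (act_neg A v).
  - eapply fp_cons; [apply farey_adj_act, Hux; exact HA | exact IH].
Qed.

Lemma path_orbit g v L : detM g = 1 -> farey_path L v (act g v) ->
  forall N, farey_path (N * L) v (act (mpow g N) v).
Proof.
  intros Hg HP N; induction N; simpl.
  - apply fp_nil; left; rewrite act_mid; reflexivity.
  - eapply path_app; [exact HP|]. rewrite act_mmul. apply path_act; assumption.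
Qed.

Lemma dist_spec L v w : farey_path L v w ->
  farey_path (farey_dist v w) v w /\ (farey_dist v w <= L)%nat.
Proof.
  intros H. unfold farey_dist.
  assert (Hmin : exists n, farey_path n v w /\ forall k, farey_path k v w -> (n <= k)%nat).
  { destruct (dec_inh_nat_subset_has_unique_least_element (fun n => farey_path n v w))
      as [n [Hn _]]; [intros n; apply classic | exists L; exact H |].
    exists n; exact Hn. }
  destruct (epsilon_spec (inhabits O) _ Hmin) as [H1 H2]. split; auto.
Qed.

(** [sg u >= 0]: the vertex [u] lies in the closed cone [[0, ∞]] of
    nonnegative slopes; [sg u > 0]: it lies in the open cone []0, ∞[]. *)
Definition sg (u : Z * Z) : Z := fst u * snd u.

Definition entries_ge (k : Z) (A : mat2) : Prop :=
  k <= ma A /\ k <= mb A /\ k <= mc A /\ k <= md A.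

Definition off_axes (u : Z * Z) : Prop := 2 <= Z.abs (fst u) /\ 2 <= Z.abs (snd u).

Lemma sg_neg u : sg (negv u) = sg u.
Proof. destruct u; unfold sg, negv; simpl; ring. Qed.

Lemma nonzero_coord (x y : Z) : (x, y) <> (0, 0) -> x <> 0 \/ y <> 0.
Proof. intros H. destruct (Z.eq_dec x 0), (Z.eq_dec y 0); subst; auto. Qed.

Lemma positive_into_open_cone M a :
  entries_ge 1 M -> 0 <= sg a -> a <> (0, 0) -> 0 < sg (act M a).
Proof.
  destruct M as [p q r s], a as [x y]; unfold entries_ge, sg, act; simpl.
  intros HM Ha Hnz%nonzero_coord.
  destruct (Z_le_gt_dec 0 x), (Z_le_gt_dec 0 y); nia.
Qed.

(** The edge [0, ∞] separates the Farey graph: no edge joins the open positive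
    cone to the open negative cone. *)
Lemma cone_separation a b : farey_adj a b -> 0 < sg a -> 0 <= sg b.
Proof.
  destruct a as [x y], b as [u v]; unfold farey_adj, sg; simpl; intros H Ha.
  destruct (Z_le_gt_dec 0 x), (Z_le_gt_dec 0 u); nia.
Qed.

Lemma abs_mul_eq_1 x y : Z.abs (x * y) = 1 -> Z.abs x = 1.
Proof. rewrite Z.abs_mul; intros H. apply Z.mul_eq_1 in H. lia. Qed.

(** A vertex off the axes is not adjacent to [0] or [∞]; so if it lies in the
    open cone, so do all its neighbours. *)
Lemma off_axes_neighbour u b : off_axes u -> 0 < sg u -> farey_adj u b -> 0 < sg b.
Proof.
  intros [H1 H2] Hu Hub. pose proof (cone_separation u b Hub Hu) as Hb.
  destruct u as [x y], b as [p q]; unfold farey_adj, sg in *; simpl in *.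
  destruct (Z.eq_dec p 0) as [->|Hp]; [|destruct (Z.eq_dec q 0) as [->|Hq]].
  - rewrite Z.mul_0_r, Z.sub_0_r in Hub. apply abs_mul_eq_1 in Hub; lia.
  - rewrite Z.mul_0_r, Z.sub_0_l, Z.abs_opp in Hub. apply abs_mul_eq_1 in Hub; lia.
  - assert (p * q <> 0) by (intros E; apply Z.mul_eq_0 in E; tauto). lia.
Qed.

Lemma positive_image_off_axes M a :
  entries_ge 1 M -> 0 < sg a -> off_axes (act M a).
Proof.
  destruct M as [p q r s], a as [x y]; unfold entries_ge, off_axes, sg, act; simpl.
  intros HM Ha. destruct (Z_le_gt_dec 0 x); split; nia.
Qed.

Lemma big_image_off_axes M a :
  entries_ge 2 M -> 0 <= sg a -> a <> (0, 0) -> off_axes (act M a).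
Proof.
  destruct M as [p q r s], a as [x y]; unfold entries_ge, off_axes, sg, act; simpl.
  intros HM Ha Hnz%nonzero_coord.
  destruct (Z_le_gt_dec 0 x), (Z_le_gt_dec 0 y); split; nia.
Qed.

(** A descending chain of vertex predicates [Q 0 ⊇ Q 1 ⊇ ...] such that
    crossing one edge descends at most [c] steps: an edge path of length [L]
    descends at most [c * L] steps.  This turns level sets into lower bounds
    for the Farey distance. *)
Section DescendingChain.
Variable Q : nat -> Z * Z -> Prop.
Variable c : nat.
Hypothesis Q_neg : forall i u, Q i (negv u) -> Q i u.
Hypothesis Q_adj : forall i u v, farey_adj u v -> Q (c + i) v -> Q i u.
Hypothesis Q_mono : forall i u, u <> (0, 0) -> Q (S i) u -> Q i u.

Lemma chain_path L u v : farey_path L u v -> forall i, Q (c * L + i) v -> Q i u.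
Proof.
  induction 1 as [u v H | L u w v Huw _ IH]; intros i Hv.
  - rewrite Nat.mul_0_r in Hv. destruct H as [-> | ->]; [exact Hv | apply Q_neg, Hv].
  - apply (Q_adj i u w Huw), IH. replace (c * L + (c + i))%nat with (c * S L + i)%nat by lia.
    exact Hv.
Qed.

Lemma chain_mono u i j : u <> (0, 0) -> (i <= j)%nat -> Q j u -> Q i u.
Proof. intros Hu Hij; induction Hij; auto. Qed.

Lemma chain_bound L u v j :
  farey_path L u v -> v <> (0, 0) -> Q j v -> ~ Q 1 u -> (j <= c * L)%nat.
Proof.
  intros HP Hv Hj Hu. destruct (Nat.le_gt_cases j (c * L)) as [|Hlt]; [assumption|].
  exfalso; apply Hu, (chain_path L u v HP 1).
  apply (chain_mono v _ j Hv); [lia | exact Hj].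
Qed.
End DescendingChain.

(** The level sets of [M]: [level M (2k) u] says [u ∈ M^k [0, ∞]] and
    [level M (2k+1) u] says [u ∈ M^k ]0, ∞[]. *)
Fixpoint level (M : mat2) (i : nat) (u : Z * Z) : Prop :=
  match i with
  | O => 0 <= sg u
  | S O => 0 < sg u
  | S (S i) => level M i (act (adj M) u)
  end.

Lemma nat_ind2 (P : nat -> Prop) :
  P O -> P 1%nat -> (forall i, P i -> P (S (S i))) -> forall i, P i.
Proof.
  intros H0 H1 HS i. assert (P i /\ P (S i)) as [Hi _]; [|exact Hi].
  induction i as [|i [IH1 IH2]]; auto.
Qed.

Section Levels.
Variable M : mat2.
Hypothesis HdM : detM M = 1.
Hypothesis HM : entries_ge 1 M.

Lemma level_neg i u : level M i (negv u) -> level M i u.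
Proof.
  revert u; induction i using nat_ind2; intros u; simpl; try rewrite sg_neg; auto.
  rewrite act_neg; apply IHi.
Qed.

(** The levels descend, because [M [0, ∞] ⊆ ]0, ∞[] (up to the zero vector). *)
Lemma level_mono i u : u <> (0, 0) -> level M (S i) u -> level M i u.
Proof.
  revert u; induction i using nat_ind2; intros u Hu; simpl.
  - lia.
  - intros H. rewrite <- (act_adj_r M u HdM).
    apply positive_into_open_cone; [exact HM | exact H|].
    apply act_nonzero; [apply detM_adj_one|]; assumption.
  - apply IHi, act_nonzero; [apply detM_adj_one|]; assumption.
Qed.

Lemma pull_nonzero u v : farey_adj u v -> act (adj M) v <> (0, 0).
Proof.
  intros Huv. apply act_nonzero; [apply detM_adj_one, HdM|].
  apply (farey_adj_nonzero v u), farey_adj_sym, Huv.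
Qed.

Lemma level_adj_positive i u v : farey_adj u v -> level M (2 + i) v -> level M i u.
Proof.
  revert u v; induction i using nat_ind2; intros u v Huv; simpl; intros Hv.
  - pose proof (pull_nonzero u v Huv) as Hw.
    rewrite <- (act_adj_r M v HdM) in Huv.
    apply (cone_separation _ _ (farey_adj_sym _ _ Huv)), positive_into_open_cone;
      assumption.
  - pose proof (pull_nonzero u v Huv) as Hw.
    rewrite <- (act_adj_r M v HdM) in Huv.
    apply (off_axes_neighbour _ _ (positive_image_off_axes M _ HM Hv)).
    + apply positive_into_open_cone; [exact HM | lia | exact Hw].
    + apply farey_adj_sym, Huv.
  - exact (IHi _ _ (farey_adj_act _ _ _ (detM_adj_one M HdM) Huv) Hv).
Qed.

Lemma level_adj_big i u v :
  entries_ge 2 M -> farey_adj u v -> level M (1 + i) v -> level M i u.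
Proof.
  intros HM2; revert u v; induction i using nat_ind2; intros u v Huv; simpl; intros Hv.
  - apply (cone_separation _ _ (farey_adj_sym _ _ Huv) Hv).
  - pose proof (pull_nonzero u v Huv) as Hw.
    rewrite <- (act_adj_r M v HdM) in Huv.
    apply (off_axes_neighbour _ _ (big_image_off_axes M _ HM2 Hv Hw)).
    + apply positive_into_open_cone; assumption.
    + apply farey_adj_sym, Huv.
  - exact (IHi _ _ (farey_adj_act _ _ _ (detM_adj_one M HdM) Huv) Hv).
Qed.

Lemma level_orbit k x : 0 <= sg x -> level M (2 * k) (act (mpow M k) x).
Proof.
  intros Hx; induction k.
  - simpl; rewrite act_mid; exact Hx.
  - replace (2 * S k)%nat with (S (S (2 * k))) by lia. simpl.
    rewrite act_mmul, act_adj_l by exact HdM. exact IHk.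
Qed.
End Levels.

(** If each edge descends at most
    [c] levels of [M], then [2N <= c * L] for every path of length [L] from [∞]
    to [g^(N+1) ∞]: the path is moved by [A] to one from [A ∞] (not in level 1)
    to [M^N (M A ∞)] (in level [2N]). *)
Lemma orbit_lower_bound c g A M N L :
  detM A = 1 -> detM M = 1 -> entries_ge 1 M ->
  (forall i u v, farey_adj u v -> level M (c + i) v -> level M i u) ->
  mmul A g = mmul M A ->
  sg (act A infty) <= 0 -> 0 <= sg (act M (act A infty)) ->
  farey_path L infty (act (mpow g (S N)) infty) -> (2 * N <= c * L)%nat.
Proof.
  intros HA HdM HM Hadj Hconj Hstart Hnext HP.
  assert (Hinfty : infty <> (0, 0)) by discriminate.
  set (w0 := act A infty) in *.
  assert (Hend : act A (act (mpow g (S N)) infty) = act (mpow M N) (act M w0)).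
  { rewrite <- act_mmul, mpow_intertwine with (M := M) by exact Hconj.
    rewrite mpow_succ_r, !act_mmul; reflexivity. }
  apply (chain_bound (level M) c (level_neg M) Hadj (level_mono M HdM HM)
           L w0 (act (mpow M N) (act M w0))).
  - rewrite <- Hend. apply path_act; assumption.
  - apply act_nonzero; [apply detM_mpow; exact HdM|].
    apply act_nonzero; [exact HdM | apply act_nonzero; assumption].
  - apply level_orbit; assumption.
  - simpl; lia.
Qed.

Lemma word_mat_app x y : word_mat (x ++ y) = mmul (word_mat x) (word_mat y).
Proof. induction x; simpl; [rewrite mmul_mid_l | rewrite IHx, mmul_assoc]; reflexivity. Qed.

Lemma detM_word w : detM (word_mat w) = 1.
Proof. induction w as [|b w IH]; simpl; [reflexivity|]. rewrite detM_mmul, IH; destruct b; reflexivity. Qed.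

Lemma word_entries w : let A := word_mat w in
  1 <= ma A /\ Z.of_nat (numU w) <= mb A /\ Z.of_nat (numV w) <= mc A /\ 1 <= md A.
Proof.
  induction w as [|l w IH]; [simpl; lia|].
  unfold numU, numV in *; simpl word_mat; destruct (word_mat w) as [a b c d].
  destruct l; cbn -[Z.mul Z.add Z.of_nat] in *; rewrite ?Nat2Z.inj_succ; lia.
Qed.

Lemma word_positive w : (1 <= numU w)%nat -> (1 <= numV w)%nat -> entries_ge 1 (word_mat w).
Proof. pose proof (word_entries w); unfold entries_ge; simpl in *; lia. Qed.

Lemma entries_ge_mul A B : entries_ge 1 A -> entries_ge 1 B -> entries_ge 2 (mmul A B).
Proof. destruct A, B; unfold entries_ge, mmul; simpl; nia. Qed.

Lemma word_infty_cone w : 0 <= sg (act (word_mat w) infty).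
Proof. pose proof (word_entries w); destruct (word_mat w); unfold sg, act; simpl in *; nia. Qed.

Lemma word_inv_infty_cone w : sg (act (adj (word_mat w)) infty) <= 0.
Proof. pose proof (word_entries w); destruct (word_mat w); unfold sg, act; simpl in *; nia. Qed.

Definition has_both (w : list bool) : Prop := (1 <= numU w)%nat /\ (1 <= numV w)%nat.

Lemma count_repeat (b c : bool) k :
  count_occ bool_dec (repeat c k) b = if Bool.eqb c b then k else O.
Proof.
  destruct b, c; simpl;
    [apply count_occ_repeat_eq | apply count_occ_repeat_neq
    | apply count_occ_repeat_neq | apply count_occ_repeat_eq]; congruence.
Qed.

Lemma count_zero_repeat (b : bool) r :
  count_occ bool_dec r b = O -> r = repeat (negb b) (length r).
Proof.
  induction r as [|x r IH]; simpl; [reflexivity|].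
  destruct (bool_dec x b) as [->|Hx]; [discriminate|]. intros H.
  f_equal; [destruct x, b; simpl; congruence | exact (IH H)].
Qed.

Lemma initial_run (b : bool) l : exists k rest, l = repeat b k ++ rest /\
  (rest = nil \/ exists r, rest = negb b :: r).
Proof.
  induction l as [|x l [k [rest [-> Hrest]]]].
  - exists O, nil; auto.
  - destruct (Bool.eqb x b) eqn:E.
    + apply Bool.eqb_prop in E as ->. exists (S k), rest; auto.
    + exists O, (x :: repeat b k ++ rest). split; [reflexivity|].
      right; eexists; f_equal. destruct x, b; simpl in *; congruence.
Qed.

Ltac count_letters :=
  unfold has_both, numU, numV in *;
  repeat progress (simpl in *; rewrite ?count_occ_app, ?count_repeat in * ).

Lemma rotation_split w : (2 <= numU w)%nat -> (2 <= numV w)%nat ->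
  exists x y p q, w = x ++ y /\ y ++ x = p ++ q /\ has_both p /\ has_both q.
Proof.
  intros HU HV. destruct w as [|b w]; [count_letters; lia|].
  destruct (initial_run b w) as [k [rest [-> [-> | [r ->]]]]].
  { destruct b; count_letters; lia. }
  destruct (Nat.eq_dec (count_occ bool_dec r b) O) as [Hb|Hb].
  - (* w = b^(k+1) (negb b)^(length r + 1): rotate the first letter to the end *)
    rewrite (count_zero_repeat b r Hb) in *.
    exists (b :: nil), (repeat b k ++ negb b :: repeat (negb b) (length r)),
      (repeat b k ++ negb b :: nil), (repeat (negb b) (length r) ++ b :: nil).
    split; [reflexivity|]. rewrite <- !app_assoc; split; [reflexivity|].
    destruct b; count_letters; lia.
  - destruct (Nat.eq_dec (count_occ bool_dec r (negb b)) O) as [Hnb|Hnb].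
    + (* then [negb b] occurs only once in [w] *)
      destruct b; count_letters; lia.
    + (* [r] contains both letters: cut [w] after its first letter change *)
      exists nil, (b :: repeat b k ++ negb b :: r), (b :: repeat b k ++ negb b :: nil), r.
      split; [reflexivity|]. simpl; rewrite app_nil_r, <- app_assoc. split; [reflexivity|].
      destruct b; count_letters; lia.
Qed.

Definition orbit_dist (g : mat2) (j : nat) : nat := farey_dist infty (act (mpow g j) infty).

Lemma orbit_dist_upper g v K L j : detM g = 1 ->
  farey_path K infty v -> farey_path L v (act g v) -> (orbit_dist g j <= K + j * L + K)%nat.
Proof.
  intros Hg HK HL.
  assert (HP : farey_path (K + (j * L + K)) infty (act (mpow g j) infty)).
  { apply (path_app _ _ _ v); [exact HK|].
    apply (path_app _ _ _ (act (mpow g j) v)); [apply path_orbit; assumption|].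
    apply path_act, path_rev, HK. apply detM_mpow, Hg. }
  apply dist_spec in HP as [_ HP]. unfold orbit_dist; lia.
Qed.

(** Each letter moves [∞] by at most one edge. *)
Lemma path_word w : exists L, (L <= length w)%nat /\ farey_path L infty (act (word_mat w) infty).
Proof.
  induction w as [|b w [L [HL HP]]]; simpl.
  - exists O; split; [lia | apply fp_nil; left; rewrite act_mid; reflexivity].
  - apply (path_act (letter b)) in HP; [|destruct b; reflexivity].
    rewrite <- act_mmul in HP.
    destruct b; [exists L | exists (S L)]; split; try lia; [exact HP|].
    apply (path_app 1 L _ (act matV infty)); [apply path_edge; reflexivity | exact HP].
Qed.

Lemma word_orbit_dist_upper w j : (orbit_dist (word_mat w) j <= j * length w)%nat.
Proof.
  destruct (path_word w) as [L [HL HP]].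
  pose proof (orbit_dist_upper (word_mat w) infty O L j (detM_word w)
                (fp_nil _ _ (or_introl eq_refl)) HP).
  pose proof (Nat.mul_le_mono_l _ _ j HL). lia.
Qed.

Lemma word_orbit_path w j :
  farey_path (orbit_dist (word_mat w) j) infty (act (mpow (word_mat w) j) infty).
Proof.
  destruct (path_word w) as [L [_ HL]].
  apply (dist_spec _ _ _ (path_orbit _ infty L (detM_word w) HL j)).
Qed.

Lemma word_orbit_dist_positive w j : (1 <= numU w)%nat -> (1 <= numV w)%nat ->
  (j <= orbit_dist (word_mat w) j + 1)%nat.
Proof.
  intros HU HV. destruct j as [|N]; [lia|].
  assert (HM : entries_ge 1 (word_mat w)) by (apply word_positive; assumption).
  assert (Hconj : mmul mid (word_mat w) = mmul (word_mat w) mid)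
    by (rewrite mmul_mid_l, mmul_mid_r; reflexivity).
  assert (Hstart : sg (act mid infty) <= 0) by (rewrite act_mid; unfold sg; simpl; lia).
  assert (Hnext : 0 <= sg (act (word_mat w) (act mid infty)))
    by (rewrite act_mid; apply word_infty_cone).
  pose proof (orbit_lower_bound 2 (word_mat w) mid (word_mat w) N _ eq_refl (detM_word w) HM
    (level_adj_positive _ (detM_word w) HM) Hconj Hstart Hnext (word_orbit_path w (S N))).
  lia.
Qed.

(** A cyclic rotation of [W = X Y] is [Y X = P Q]
    with [P], [Q] positive, so [M = Y X] has entries [>= 2]; the base point is
    [X^-1 ∞]. *)
Lemma word_orbit_dist_big w j : (2 <= numU w)%nat -> (2 <= numV w)%nat ->
  (2 * j <= orbit_dist (word_mat w) j + 2)%nat.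
Proof.
  intros HU HV. destruct j as [|N]; [lia|].
  destruct (rotation_split w HU HV) as [x [y [p [q [Hw [Hrot [[Hp1 Hp2] [Hq1 Hq2]]]]]]]].
  set (X := word_mat x); set (Y := word_mat y).
  assert (Hg : word_mat w = mmul X Y) by (rewrite Hw; apply word_mat_app).
  assert (HM2 : entries_ge 2 (mmul Y X)).
  { unfold X, Y; rewrite <- word_mat_app, Hrot, word_mat_app.
    apply entries_ge_mul; apply word_positive; assumption. }
  assert (HM : entries_ge 1 (mmul Y X)) by (unfold entries_ge in *; lia).
  assert (HdX : detM X = 1) by apply detM_word.
  assert (HdM : detM (mmul Y X) = 1) by (rewrite detM_mmul, HdX, Z.mul_1_r; apply detM_word).
  assert (Hconj : mmul (adj X) (word_mat w) = mmul (mmul Y X) (adj X)).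
  { rewrite Hg, mmul_assoc, adj_l, mmul_mid_l, <- mmul_assoc, adj_r, mmul_mid_r by exact HdX.
    reflexivity. }
  assert (Hnext : 0 <= sg (act (mmul Y X) (act (adj X) infty)))
    by (rewrite act_mmul, act_adj_r by exact HdX; apply word_infty_cone).
  pose proof (orbit_lower_bound 1 _ _ _ N _ (detM_adj_one X HdX) HdM HM
    (fun i u v => level_adj_big _ HdM HM i u v HM2) Hconj
    (word_inv_infty_cone x) Hnext (word_orbit_path w (S N))).
  lia.
Qed.

Lemma word_mat_repeat_U k : word_mat (repeat true k) = M2 1 (Z.of_nat k) 0 1.
Proof.
  induction k; [reflexivity|]. cbn [repeat word_mat]; rewrite IHk.
  unfold mmul, letter, matU; cbn -[Z.mul Z.add Z.of_nat]; rewrite Nat2Z.inj_succ; f_equal; lia.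
Qed.

Lemma word_mat_repeat_V k : word_mat (repeat false k) = M2 1 0 (Z.of_nat k) 1.
Proof.
  induction k; [reflexivity|]. cbn [repeat word_mat]; rewrite IHk.
  unfold mmul, letter, matV; cbn -[Z.mul Z.add Z.of_nat]; rewrite Nat2Z.inj_succ; f_equal; lia.
Qed.

Definition UmVn_mat (m n : nat) : mat2 :=
  M2 (1 + Z.of_nat m * Z.of_nat n) (Z.of_nat m) (Z.of_nat n) 1.

Lemma word_mat_UmVn m n : word_mat (UmVn m n) = UmVn_mat m n.
Proof.
  unfold UmVn; rewrite word_mat_app, word_mat_repeat_U, word_mat_repeat_V.
  unfold mmul, UmVn_mat; cbn -[Z.mul Z.add Z.of_nat]; f_equal; lia.
Qed.

Lemma detM_UmVn m n : detM (UmVn_mat m n) = 1.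
Proof. unfold detM, UmVn_mat; cbn [ma mb mc md]; lia. Qed.

(** [U^m V^n] moves [∞] by two edges, through [m/1]. *)
Lemma UmVn_orbit_dist m n j : (orbit_dist (word_mat (UmVn m n)) j <= 2 * j)%nat.
Proof.
  assert (HP : farey_path 2 infty (act (UmVn_mat m n) infty)).
  { apply (path_app 1 1 _ (Z.of_nat m, 1)); apply path_edge;
      unfold farey_adj, act, UmVn_mat, infty; cbn [fst snd ma mb mc md]; lia. }
  pose proof (orbit_dist_upper _ infty O 2 j (detM_UmVn m n) (fp_nil _ _ (or_introl eq_refl)) HP).
  rewrite word_mat_UmVn; lia.
Qed.

(** If [n = 1], [U^m V] moves [∞] by one edge; if [m = 1], [U V^n] moves
    [1/1] by one edge. *)
Lemma UmVn_orbit_dist_one m n j : (m = 1 \/ n = 1)%nat ->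
  (orbit_dist (word_mat (UmVn m n)) j <= j + 2)%nat.
Proof.
  rewrite word_mat_UmVn; intros [-> | ->].
  - assert (H1 : farey_path 1 infty (1, 1)) by (apply path_edge; reflexivity).
    assert (H2 : farey_path 1 (1, 1) (act (UmVn_mat 1 n) (1, 1))).
    { apply path_edge; unfold farey_adj, act, UmVn_mat; cbn [fst snd ma mb mc md]; lia. }
    pose proof (orbit_dist_upper _ (1, 1) 1 1 j (detM_UmVn 1 n) H1 H2). lia.
  - assert (H1 : farey_path 1 infty (act (UmVn_mat m 1) infty)).
    { apply path_edge; unfold farey_adj, act, UmVn_mat, infty; cbn [fst snd ma mb mc md]; lia. }
    pose proof (orbit_dist_upper _ infty O 1 j (detM_UmVn m 1) (fp_nil _ _ (or_introl eq_refl)) H1).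
    lia.
Qed.

Open Scope R_scope.

Lemma ratio_mul (d : nat -> nat) j : (1 <= j)%nat -> INR (d j) / INR j * INR j = INR (d j).
Proof. intros H. field. apply not_0_INR. lia. Qed.

Lemma INR_ge1 j : (1 <= j)%nat -> 1 <= INR j.
Proof. intros H. apply (le_INR 1), H. Qed.

Lemma liminf_ge (d : nat -> nat) l c A :
  is_liminf (fun j => INR (d j) / INR j) l ->
  (forall j, (1 <= j)%nat -> c * INR j - A <= INR (d j)) -> c <= l.
Proof.
  intros [_ Hfreq] Hd. destruct (Rle_or_lt c l) as [|Hlt]; [assumption|]. exfalso.
  set (eps := (c - l) / 2).
  assert (He : 0 < eps) by (unfold eps; lra).
  destruct (INR_archimed eps A He) as [n Hn].
  destruct (Hfreq eps He (Nat.max n 1)) as [j [Hj Hu]].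
  pose proof (ratio_mul d j ltac:(lia)) as Hr. pose proof (Hd j ltac:(lia)).
  assert (INR n <= INR j) by (apply le_INR; lia).
  pose proof (INR_ge1 j ltac:(lia)).
  assert (INR (d j) < (l + eps) * INR j) by (rewrite <- Hr; apply Rmult_lt_compat_r; lra).
  unfold eps in *; nra.
Qed.

Lemma liminf_le (d : nat -> nat) l c A :
  is_liminf (fun j => INR (d j) / INR j) l ->
  (forall j, (1 <= j)%nat -> INR (d j) <= c * INR j + A) -> l <= c.
Proof.
  intros [Hev _] Hd. destruct (Rle_or_lt l c) as [|Hlt]; [assumption|]. exfalso.
  set (eps := (l - c) / 2).
  assert (He : 0 < eps) by (unfold eps; lra).
  destruct (INR_archimed eps (Rabs A) He) as [n Hn].
  destruct (Hev eps He) as [N HN].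
  set (j := Nat.max (Nat.max N n) 1).
  specialize (HN j ltac:(unfold j; lia)).
  pose proof (ratio_mul d j ltac:(unfold j; lia)) as Hr. pose proof (Hd j ltac:(unfold j; lia)).
  assert (INR n <= INR j) by (apply le_INR; unfold j; lia).
  pose proof (INR_ge1 j ltac:(unfold j; lia)). pose proof (Rle_abs A).
  assert ((l - eps) * INR j < INR (d j)) by (rewrite <- Hr; apply Rmult_lt_compat_r; lra).
  unfold eps in *; nra.
Qed.

Lemma liminf_exists (d : nat -> nat) K :
  (forall j, (d j <= j * K)%nat) -> exists l, is_liminf (fun j => INR (d j) / INR j) l.
Proof.
  intros Hd. destruct (Lim_seq.ex_LimInf_seq (fun j => INR (d j) / INR j)) as [l Hl].
  destruct l as [r| |]; simpl in Hl.
  - exists r. split.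
    + intros eps He. destruct (Hl (mkposreal eps He)) as [_ [N HN]]. exists N; exact HN.
    + intros eps He N. destruct (Hl (mkposreal eps He)) as [Hfreq _]. apply Hfreq.
  - exfalso. destruct (Hl (INR K)) as [N HN].
    set (j := Nat.max N 1). specialize (HN j ltac:(unfold j; lia)).
    pose proof (ratio_mul d j ltac:(unfold j; lia)) as Hr.
    assert (INR (d j) <= INR j * INR K) by (rewrite <- mult_INR; apply le_INR, Hd).
    pose proof (INR_ge1 j ltac:(unfold j; lia)).
    assert (INR K * INR j < INR (d j)) by (rewrite <- Hr; apply Rmult_lt_compat_r; lra).
    nra.
  - exfalso. destruct (Hl (-1) 1%nat) as [j [Hj Hu]].
    pose proof (ratio_mul d j Hj). pose proof (pos_INR (d j)). pose proof (INR_ge1 j Hj).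
    assert (INR (d j) / INR j * INR j < -1 * INR j) by (apply Rmult_lt_compat_r; lra).
    nra.
Qed.

Lemma stable_length_spec w :
  is_liminf (fun j => INR (orbit_dist (word_mat w) j) / INR j) (stable_length (word_mat w)).
Proof.
  apply (epsilon_spec (inhabits 0) _ (liminf_exists _ (length w) (word_orbit_dist_upper w))).
Qed.

Lemma stable_length_UmVn m n : stable_length (word_mat (UmVn m n)) <= 2.
Proof.
  apply (liminf_le _ _ 2 0 (stable_length_spec (UmVn m n))). intros j _.
  pose proof (le_INR _ _ (UmVn_orbit_dist m n j)) as H.
  rewrite mult_INR in H; simpl in H; lra.
Qed.

Lemma stable_length_UmVn_one m n : (m = 1 \/ n = 1)%nat -> stable_length (word_mat (UmVn m n)) <= 1.
Proof.
  intros Hmn. apply (liminf_le _ _ 1 2 (stable_length_spec (UmVn m n))). intros j _.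
  pose proof (le_INR _ _ (UmVn_orbit_dist_one m n j Hmn)) as H.
  rewrite plus_INR in H; simpl in H; lra.
Qed.

Lemma stable_length_positive w : (1 <= numU w)%nat -> (1 <= numV w)%nat ->
  1 <= stable_length (word_mat w).
Proof.
  intros HU HV. apply (liminf_ge _ _ 1 1 (stable_length_spec w)). intros j _.
  pose proof (le_INR _ _ (word_orbit_dist_positive w j HU HV)) as H.
  rewrite plus_INR in H; simpl in H; lra.
Qed.

Lemma stable_length_big w : (2 <= numU w)%nat -> (2 <= numV w)%nat ->
  2 <= stable_length (word_mat w).
Proof.
  intros HU HV. apply (liminf_ge _ _ 2 2 (stable_length_spec w)). intros j _.
  pose proof (le_INR _ _ (word_orbit_dist_big w j HU HV)) as H.
  rewrite plus_INR, mult_INR in H; simpl in H; lra.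
Qed.

Theorem mainTheorem10 (m n : nat) (hm : (1 <= m)%nat) (hn : (1 <= n)%nat) :
  (forall w : list bool, numU w = m -> numV w = n ->
     stable_length (word_mat (UmVn m n)) <= stable_length (word_mat w)) /\
  stable_length (word_mat (UmVn m n)) <= 2.
Proof.
  split; [|apply stable_length_UmVn].
  intros w HU HV.
  assert (Hcases : (m = 1 \/ n = 1)%nat \/ (2 <= m /\ 2 <= n)%nat) by lia.
  destruct Hcases as [Hone | [Hm2 Hn2]].
  -
    apply (Rle_trans _ 1); [apply stable_length_UmVn_one, Hone|].
    apply stable_length_positive; lia.
  -
    apply (Rle_trans _ 2); [apply stable_length_UmVn|].
    apply stable_length_big; lia.
Qed.
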